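(* Let $X$ be a weakly connected digraph. Then for every $k\in\mathbb{N}$, $\lambda_1(H_k(X))\le\rho(H_k(X))\le3\lambda_1(H_k(X))$, where $\lambda_1(H_k(X))$ is the largest eigenvalue of $H_k(X)$.
   Context: A digraph $X$ has vertex set $\{v_1,\dots,v_n\}$ and a set of directed edges $\overrightarrow{e_{st}}$ (no loops); a pair with both $\overrightarrow{e_{st}}$ and $\overrightarrow{e_{ts}}$ is a digon. The underlying graph $\Gamma(X)$ is the simple graph with $v_s\sim v_t$ iff at least one of $\overrightarrow{e_{st}},\overrightarrow{e_{ts}}$ is in $X$; $X$ is weakly connected if $\Gamma(X)$ is connected. For $k\in\mathbb{N}$, the $k$-generalized Hermitian adjacency matrix $H_k(X)$ has $(s,t)$ entry $1$ if both $\overrightarrow{e_{st}},\overrightarrow{e_{ts}}\in E(X)$; $e^{i\pi/(k+1)}$ if $\overrightarrow{e_{st}}\in E(X)$ and $\overrightarrow{e_{ts}}\notin E(X)$; $e^{-i\pi/(k+1)}$ if $\overrightarrow{e_{st}}\notin E(X)$ and $\overrightarrow{e_{ts}}\in E(X)$; and $0$ otherwise. $\rho$ is the spectral radius. *)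

From HB Require Import structures.
From mathcomp Require Import all_boot all_order all_algebra.
From mathcomp Require Import reals trigo.
From mathcomp Require Import complex.
Set Implicit Arguments. Unset Strict Implicit. Unset Printing Implicit Defensive.
Import Order.TTheory GRing.Theory Num.Theory.
Local Open Scope ring_scope.
Import Num.Def.

(* A digraph on vertex set 'I_n is a relation E : rel 'I_n, where
   E s t means the arc e_st (from v_s to v_t) is present. *)
Definition loopless (n : nat) (E : rel 'I_n) : Prop := forall s, ~~ E s s.

Definition underlying (n : nat) (E : rel 'I_n) : rel 'I_n :=
  fun s t => (s != t) && (E s t || E t s).

Definition weakly_connected (n : nat) (E : rel 'I_n) : Prop :=
  forall s t : 'I_n, connect (underlying E) s t.

(* e^{i pi/(k+1)} = cos(pi/(k+1)) + i sin(pi/(k+1)) *)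
Definition omega_k (R : realType) (k : nat) : R[i] :=
  (cos (pi / (k.+1)%:R) +i* sin (pi / (k.+1)%:R))%C.

Definition Hk (R : realType) (k n : nat) (E : rel 'I_n) : 'M[R[i]]_n :=
  \matrix_(s, t)
    (if E s t && E t s then 1
     else if E s t then omega_k R k
     else if E t s then (omega_k R k)^*
     else 0).

Definition largest_eigenvalue (C : numClosedFieldType) (n : nat)
    (A : 'M[C]_n) (l : C) : Prop :=
  eigenvalue A l /\ (forall mu, eigenvalue A mu -> mu <= l).

Definition spectral_radius (C : numClosedFieldType) (n : nat)
    (A : 'M[C]_n) (r : C) : Prop :=
  (exists2 mu, eigenvalue A mu & `|mu| = r) /\
  (forall mu, eigenvalue A mu -> `|mu| <= r).

(** Since [k >= 1], every entry of [H_k] has nonnegative real part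
    ([Re ω = cos (π/(k+1)) >= 0]).  Let [x] be an eigenvector for an
    eigenvalue [μ] and [Q y = y H y*].  Then [Q x = μ |x|²], while
    [Q (conj x)] and [Q |x|] are at most [λ₁ |x|²] by the Rayleigh bound.
    Expanding entrywise, [Q x + Q (conj x) + 2 Q |x|] is a sum of terms
    [H_st · 2 (Re w + |w|)] with [w = x_s conj(x_t)]; pairing the [(s,t)] and
    [(t,s)] terms shows it is nonnegative.  Hence [μ >= -3 λ₁], and together
    with [μ <= λ₁] this bounds every [|μ|] by [3 λ₁]. *)
From HB Require Import structures.
From mathcomp Require Import all_boot all_order all_algebra.
From mathcomp Require Import reals trigo.
From mathcomp Require Import complex.
From mathcomp Require Import spectral ring.
Set Implicit Arguments.
Unset Strict Implicit.
Unset Printing Implicit Defensive.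
Import Order.TTheory GRing.Theory Num.Theory Num.Def.
Local Open Scope ring_scope.
Local Open Scope sesquilinear_scope.

Section RowQuadraticForms.
Variables (C : numClosedFieldType) (n : nat).
Implicit Types (A : 'M[C]_n) (y : 'rV[C]_n).

Lemma quad_formE A y :
  (y *m A *m y ^t*) 0 0 = \sum_s \sum_t y 0 s * A s t * (y 0 t)^*.
Proof.
rewrite !mxE exchange_big /=; apply: eq_bigr => t _.
by rewrite !mxE big_distrl.
Qed.

Lemma sqnorm_rowE y : (y *m y ^t*) 0 0 = \sum_s `|y 0 s| ^+ 2.
Proof. by rewrite !mxE; apply: eq_bigr => s _; rewrite !mxE normCK. Qed.

Lemma sqnorm_row_gt0 y : y != 0 -> 0 < (y *m y ^t*) 0 0.
Proof.
move=> y_neq0; have [s ys_neq0] : exists s, y 0 s != 0.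
  apply/existsP; apply: contraR y_neq0 => /existsPn y0; apply/eqP/rowP => j.
  by rewrite !mxE; apply/eqP; move: (y0 j); rewrite negbK.
rewrite sqnorm_rowE (bigD1 s) //= ltr_wpDr ?sumr_ge0 // => [j _|].
  exact: exprn_ge0.
by rewrite exprn_gt0 // normr_gt0.
Qed.

Lemma hermitian_quad_form_le A (l : C) :
  A ^t* = A -> (forall mu, eigenvalue A mu -> mu <= l) ->
  forall y, (y *m A *m y ^t*) 0 0 <= l * (y *m y ^t*) 0 0.
Proof.
move=> A_herm le_l y.
have /orthomx_spectralP A_diag : A \is normalmx.
  by apply/normalmxP; rewrite A_herm.
set P := spectralmx A in A_diag; set d := spectral_diag A in A_diag.
have P_unitary : P \is unitarymx := spectral_unitarymx A.
rewrite invmx_unitary // in A_diag.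
set z := y *m P ^t*.
have -> : y *m A *m y ^t* = z *m diag_mx d *m z ^t*.
  by rewrite /z {1}A_diag trmx_mul map_mxM trmxCK !mulmxA.
have -> : y *m y ^t* = z *m z ^t*.
  by rewrite /z trmx_mul map_mxM trmxCK mulmxA mulmxKtV.
rewrite !mxE big_distrr /=; apply: ler_sum => i _.
rewrite mul_mx_diag !mxE mulrAC [l * _]mulrC -[_ * d 0 i]mulrC -[_ * l]mulrC.
apply: ler_wpM2r; first by rewrite -normCK exprn_ge0.
apply: le_l; apply/eigenvalueP; exists (row i P).
  rewrite -row_mul {1}A_diag !mulmxA (unitarymxP P_unitary) mul1mx.
  apply/rowP => j; rewrite !mxE (bigD1 i) //= !mxE eqxx mulr1n big1 ?addr0 //.
  by move=> k /negPf k_neq_i; rewrite !mxE eq_sym k_neq_i mulr0n mul0r.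
apply/eqP => /(congr1 (mulmx^~ (P ^t*))); rewrite rowE mulmxtVK // mul0mx.
by move/matrixP => /(_ 0 i) /eqP; rewrite !mxE !eqxx oner_eq0.
Qed.

End RowQuadraticForms.

Section RePlusNorm.
Variable C : numClosedFieldType.

Definition re_plus_norm (w : C) : C := w + w^* + `|w| *+ 2.

Lemma re_plus_norm_ge0 (w : C) : 0 <= re_plus_norm w.
Proof.
have [->|w_neq0] := eqVneq w 0.
  by rewrite /re_plus_norm normr0 mul0rn conjC0 !addr0.
have w_gt0 : 0 < `|w| by rewrite normr_gt0.
rewrite -(pmulr_rge0 _ w_gt0).
suff -> : `|w| * re_plus_norm w = `|w + `|w| | ^+ 2 by apply: exprn_ge0.
rewrite normCK rmorphD /= (conj_Creal (normr_real w)) /re_plus_norm.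
have ww : w * w^* = `|w| ^+ 2 by rewrite normCK.
have -> : (w + `|w|) * (w^* + `|w|) = w * w^* + `|w| * (w + w^*) + `|w| * `|w|
  by ring.
by rewrite ww; ring.
Qed.

Lemma re_plus_norm_conjC (w : C) : re_plus_norm (w^*) = re_plus_norm w.
Proof. by rewrite /re_plus_norm conjCK norm_conjC; ring. Qed.

Lemma re_plus_norm_mul_conjC (a b : C) :
  re_plus_norm (a * b^*) = re_plus_norm (b * a^*).
Proof. by rewrite -re_plus_norm_conjC rmorphM /= conjCK mulrC. Qed.

End RePlusNorm.

Section NonnegativeRealPartBound.
Variables (C : numClosedFieldType) (n : nat) (A : 'M[C]_n).
Hypothesis A_herm : A ^t* = A.

Let Q (y : 'rV[C]_n) : C := (y *m A *m y ^t*) 0 0.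

Lemma quad_form_conj_abs_sum (x : 'rV[C]_n) :
  Q x + Q (map_mx conjC x) + Q (map_mx normr x) *+ 2
  = \sum_s \sum_t A s t * re_plus_norm (x 0 s * (x 0 t)^*).
Proof.
rewrite /Q !quad_formE -sumrMnl -!big_split /=; apply: eq_bigr => s _.
rewrite -sumrMnl -!big_split /=; apply: eq_bigr => t _.
rewrite !mxE /re_plus_norm rmorphM /= !conjCK (conj_Creal (normr_real _)).
by rewrite normrM norm_conjC; ring.
Qed.

Hypothesis A_Re_ge0 : forall s t, 0 <= A s t + (A s t)^*.

Lemma re_plus_norm_weighted_sum_ge0 (x : 'rV[C]_n) :
  0 <= \sum_s \sum_t A s t * re_plus_norm (x 0 s * (x 0 t)^*).
Proof.
set S := \sum_s \sum_t _; rewrite -(pmulrn_lge0 _ (isT : (0 < 2)%N)).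
have A_conj s t : A t s = (A s t)^* by rewrite -{1}A_herm !mxE.
have S_transposed :
    \sum_s \sum_t (A s t)^* * re_plus_norm (x 0 s * (x 0 t)^*) = S.
  rewrite /S exchange_big /=; apply: eq_bigr => t _; apply: eq_bigr => s _.
  by rewrite -A_conj re_plus_norm_mul_conjC.
rewrite mulr2n -{2}S_transposed -big_split sumr_ge0 //= => s _.
rewrite -big_split sumr_ge0 //= => t _.
by rewrite -mulrDl mulr_ge0 ?re_plus_norm_ge0.
Qed.

Lemma eigenvalue_ge_neg3_max (l mu : C) :
  (forall nu, eigenvalue A nu -> nu <= l) -> eigenvalue A mu ->
  0 <= mu + 3%:R * l.
Proof.
move=> le_l /eigenvalueP [x x_eigen x_neq0].
pose N := (x *m x ^t*) 0 0.
have sqnorm_map (f : C -> C) : (forall w, `|f w| = `|w|) ->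
    (map_mx f x *m (map_mx f x) ^t*) 0 0 = N.
  move=> f_norm; rewrite /N !sqnorm_rowE.
  by apply: eq_bigr => s _; rewrite mxE f_norm.
have Q_bound (f : C -> C) :
    (forall w, `|f w| = `|w|) -> Q (map_mx f x) <= l * N.
  by move=> f_norm; rewrite -(sqnorm_map f) //; apply: hermitian_quad_form_le.
have Qx : Q x = mu * N by rewrite /Q x_eigen -scalemxAl mxE.
rewrite -(pmulr_lge0 _ (sqnorm_row_gt0 x_neq0)) -/N.
apply: le_trans (re_plus_norm_weighted_sum_ge0 x) _.
rewrite -quad_form_conj_abs_sum Qx.
have -> : (mu + 3%:R * l) * N = mu * N + l * N + (l * N) *+ 2 by ring.
rewrite lerD ?lerMn2r ?lerD2l ?Q_bound //.
  exact: norm_conjC.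
exact: normr_id.
Qed.

End NonnegativeRealPartBound.

Lemma omega_k_Re_ge0 (R : realType) (k : nat) :
  (1 <= k)%N -> 0 <= omega_k R k + (omega_k R k)^*.
Proof.
move=> k_ge1; rewrite /omega_k lecE /= subrr eqxx /=.
have pi_gt0 : 0 < pi :> R := pi_gt0 R.
suff cos_ge0 : 0 <= cos (pi / k.+1%:R) :> R by rewrite addr_ge0.
have angle_ge0 : 0 <= pi / k.+1%:R :> R by rewrite divr_ge0 ?ltW.
apply: cos_ge0_pihalf; apply/andP; split.
  by rewrite (le_trans _ angle_ge0) // oppr_le0 divr_ge0 ?ltW.
by rewrite ler_pM2l // lef_pV2 ?posrE ?ltr0n // ler_nat ltnS.
Qed.

Section GeneralizedHermitianAdjacency.
Variables (R : realType) (k n : nat) (E : rel 'I_n).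

Lemma Hk_hermitian : (Hk R k E) ^t* = Hk R k E.
Proof.
apply/matrixP => s t; rewrite !mxE.
by case: (E s t); case: (E t s); rewrite /= ?rmorph1 ?rmorph0 ?conjCK.
Qed.

Lemma Hk_Re_ge0 :
  (1 <= k)%N -> forall s t, 0 <= Hk R k E s t + (Hk R k E s t)^*.
Proof.
move=> k_ge1 s t; have := omega_k_Re_ge0 R k_ge1; rewrite !mxE.
by case: (E s t); case: (E t s); rewrite /= ?rmorph1 ?rmorph0 ?conjCK ?addr0 //
  1?addrC // => _; apply: addr_ge0.
Qed.

End GeneralizedHermitianAdjacency.

Theorem theorem5p4 (R : realType) (n : nat) (E : rel 'I_n)
  (Hloop : loopless E) (Hconn : weakly_connected E) (k : nat) (hk : (1 <= k)%N)
  (l r : R[i]) :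
  largest_eigenvalue (Hk R k E) l -> spectral_radius (Hk R k E) r ->
  l <= r <= 3 * l.
Proof.
move=> [l_eigen le_l] [[mu mu_eigen <-] le_r].
have ge_neg3l :=
  eigenvalue_ge_neg3_max (Hk_hermitian R k E) (Hk_Re_ge0 R E hk) le_l.
have l_ge0 : 0 <= l.
  have := ge_neg3l l l_eigen.
  by rewrite (_ : l + 3%:R * l = l *+ 4) ?pmulrn_lge0 //; ring.
have mu_real : mu \is Num.real.
  by rewrite -[mu](subKr l) rpredB ?ger0_real // subr_ge0 le_l.
apply/andP; split.
  exact: le_trans (real_ler_norm (ger0_real l_ge0)) (le_r l l_eigen).
rewrite (real_ler_norml _ mu_real) -[X in X && _]subr_ge0 opprK ge_neg3l //=.
have l_le_3l : l <= 3%:R * l by rewrite ler_peMl // ler1n.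
exact: le_trans (le_l mu mu_eigen) l_le_3l.
Qed.
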